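(* Assume the standing assumptions in the context. Let $v=(v_1,v_2)$ be the bounded constrained viscosity solution on $[\underline{x},+\infty)$ of the system $$\rho v_j(x)=H(x,y_j,Dv_j(x))+\lambda_j\big(v_{\bar\jmath}(x)-v_j(x)\big),\qquad j=1,2,\ \bar\jmath=3-j.$$ Then each $v_j$ is Lipschitz continuous on $[\underline{x},+\infty)$.
   Context: Standing assumptions: $\rho>0$; $-\infty<r<\rho$; $0<y_1<y_2$; $\gamma>1$; $\underline{x}\le0$ with $\rho\underline{x}+y_j>0$ for $j=1,2$; $\lambda_1,\lambda_2\ge0$ constants. Utility $u(c)=\frac{c^{1-\gamma}}{1-\gamma}$; Hamiltonian $H(x,y_j,p)=\sup_{c\ge0}\{u(c)+(rx+y_j-c)p\}$, equal to $(rx+y_j)p+\frac{\gamma}{1-\gamma}p^{1-1/\gamma}$ for $p\ge0$ and $+\infty$ for $p<0$. Viscosity subsolution on $S\subseteq[\underline{x},\infty)$: u.s.c. pair $v$ such that whenever $\varphi$ smooth, $j\in\{1,2\}$, and $v_j-\varphi$ has a local max (relative to $[\underline{x},\infty)$) at $x_0\in S$, then $\rho v_j(x_0)\le H(x_0,y_j,D\varphi(x_0))+\lambda_j(v_{\bar\jmath}(x_0)-v_j(x_0))$. Viscosity supersolution on $S$: l.s.c. pair with the reverse inequality at local minima $x_0\in S$. A constrained viscosity solution is a continuous pair that is a viscosity supersolution on $(\underline{x},\infty)$ and a viscosity subsolution on $[\underline{x},\infty)$ (such a bounded solution is unique). *)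

From Stdlib Require Import Reals Lra.
From Coquelicot Require Import Coquelicot.
Open Scope R_scope.

(* Index j : bool, with true = regime 1 and false = regime 2; jbar = negb j. *)

(* p^(1-1/gamma) for p >= 0, with the convention 0^a = 0 (a = 1-1/gamma > 0). *)
Definition powp (p a : R) : R := if Req_EM_T p 0 then 0 else Rpower p a.

(* Hamiltonian H(x,y,p) = sup_{c>=0} {u(c) + (r x + y - c) p}, in closed form:
   (r x + y) p + gamma/(1-gamma) p^(1-1/gamma) if p >= 0, +infinity if p < 0. *)
Definition Ham (r gamma x y p : R) : Rbar :=
  if Rle_dec 0 p
  then Finite ((r * x + y) * p + gamma / (1 - gamma) * powp p (1 - 1 / gamma))
  else p_infty.

Definition smooth (phi : R -> R) : Prop := forall n x, ex_derive_n phi n x.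

Definition loc_max_rel (xl : R) (f : R -> R) (x0 : R) : Prop :=
  exists d, 0 < d /\ forall x, xl <= x -> Rabs (x - x0) < d -> f x <= f x0.
Definition loc_min_rel (xl : R) (f : R -> R) (x0 : R) : Prop :=
  exists d, 0 < d /\ forall x, xl <= x -> Rabs (x - x0) < d -> f x0 <= f x.

Definition usc_on (xl : R) (f : R -> R) : Prop :=
  forall x0, xl <= x0 -> forall e, 0 < e -> exists d, 0 < d /\
    forall x, xl <= x -> Rabs (x - x0) < d -> f x < f x0 + e.
Definition lsc_on (xl : R) (f : R -> R) : Prop :=
  forall x0, xl <= x0 -> forall e, 0 < e -> exists d, 0 < d /\
    forall x, xl <= x -> Rabs (x - x0) < d -> f x0 - e < f x.
Definition cont_on (xl : R) (f : R -> R) : Prop :=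
  forall x0, xl <= x0 -> forall e, 0 < e -> exists d, 0 < d /\
    forall x, xl <= x -> Rabs (x - x0) < d -> Rabs (f x - f x0) < e.

Definition visc_sub (rho r gamma xl : R) (y lam : bool -> R)
  (S : R -> Prop) (v : bool -> R -> R) : Prop :=
  (forall j, usc_on xl (v j)) /\
  forall (phi : R -> R) (j : bool) (x0 : R),
    smooth phi -> S x0 -> loc_max_rel xl (fun x => v j x - phi x) x0 ->
    Rbar_le (Finite (rho * v j x0))
      (Rbar_plus (Ham r gamma x0 (y j) (Derive phi x0))
                 (Finite (lam j * (v (negb j) x0 - v j x0)))).

Definition visc_super (rho r gamma xl : R) (y lam : bool -> R)
  (S : R -> Prop) (v : bool -> R -> R) : Prop :=
  (forall j, lsc_on xl (v j)) /\
  forall (phi : R -> R) (j : bool) (x0 : R),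
    smooth phi -> S x0 -> loc_min_rel xl (fun x => v j x - phi x) x0 ->
    Rbar_le (Rbar_plus (Ham r gamma x0 (y j) (Derive phi x0))
                       (Finite (lam j * (v (negb j) x0 - v j x0))))
            (Finite (rho * v j x0)).

Definition constrained_visc_sol (rho r gamma xl : R) (y lam : bool -> R)
  (v : bool -> R -> R) : Prop :=
  (forall j, cont_on xl (v j)) /\
  visc_super rho r gamma xl y lam (fun x => xl < x) v /\
  visc_sub rho r gamma xl y lam (fun x => xl <= x) v.

Definition bounded_on (xl : R) (v : bool -> R -> R) : Prop :=
  exists M, forall j x, xl <= x -> Rabs (v j x) <= M.

Definition lipschitz_on (xl : R) (f : R -> R) : Prop :=
  exists L, forall x x', xl <= x -> xl <= x' -> Rabs (f x - f x') <= L * Rabs (x - x').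

From Stdlib Require Import Reals Lra.
From Coquelicot Require Import Coquelicot.
Open Scope R_scope.

(* Since [H] is [+oo] at negative slopes, the supersolution property forbids lines of negative
   slope touching [v_j] from below, so the bounded solution [v_j] is nondecreasing. Its
   difference quotients are bounded from above in two regimes of the drift [r x + y_j].
   Where the drift is at least some [e > 0], [H] is coercive in [p], so the supersolution
   inequality bounds the slopes of test functions touching [v_j] from below, hence the
   difference quotients. Where the drift is at most a small [e], the subsolution inequality
   fails for one fixed slope [P]; no line of slope [P] touches [v_j] from above, and as [v_j]
   is bounded its difference quotients stay below [P]. If [r >= 0] the drift is at least
   [r xl + y_j > 0] everywhere; if [r < 0] the two regimes meet where the drift equals [e]. *)

Lemma smooth_ext (f g : R -> R) : (forall x, f x = g x) -> smooth f -> smooth g.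
Proof. intros E Hf n x. exact (ex_derive_n_ext f g n x E (Hf n x)). Qed.

Lemma smooth_quadratic (s k a : R) : smooth (fun x => s * x - k * (x - a) ^ 2).
Proof.
  apply (smooth_ext (fun x => (- k * a ^ 2 + (s + 2 * k * a) * x ^ 1) + - k * x ^ 2)).
  { intros x; ring. }
  intros n x. apply ex_derive_n_plus.
  - apply filter_forall; intros t m _. apply ex_derive_n_plus.
    + apply filter_forall; intros; apply ex_derive_n_const.
    + apply filter_forall; intros; apply ex_derive_n_scal_l, ex_derive_n_pow.
  - apply filter_forall; intros t m _. apply ex_derive_n_scal_l, ex_derive_n_pow.
Qed.

Lemma Derive_quadratic (s k a x : R) :
  Derive (fun x => s * x - k * (x - a) ^ 2) x = s - 2 * k * (x - a).
Proof. apply is_derive_unique; auto_derive; [exact I | ring]. Qed.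

Lemma smooth_linear (s : R) : smooth (fun x => s * x).
Proof.
  apply (smooth_ext (fun x => s * x - 0 * (x - 0) ^ 2)); [intros x; ring |].
  apply smooth_quadratic.
Qed.

Lemma Derive_linear (s x : R) : Derive (fun x => s * x) x = s.
Proof. apply is_derive_unique; auto_derive; [exact I | ring]. Qed.

Lemma continuity_pt_linear (s x : R) : continuity_pt (fun t => s * t) x.
Proof.
  apply continuity_pt_mult; [apply continuity_pt_const; intros ? ?; auto |].
  apply continuity_pt_id.
Qed.

Definition pos_part (u : R) : R := (u + Rabs u) / 2.

Lemma pos_part_nonpos (u : R) : u <= 0 -> pos_part u = 0.
Proof. intros Hu; unfold pos_part; rewrite Rabs_left1 by lra; field. Qed.

Lemma pos_part_nonneg (u : R) : 0 <= u -> pos_part u = u.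
Proof. intros Hu; unfold pos_part; rewrite Rabs_right by lra; field. Qed.

Lemma pos_part_sqr_le (u : R) : pos_part u ^ 2 <= u ^ 2.
Proof. unfold pos_part, Rabs; destruct (Rcase_abs u); nra. Qed.

Lemma continuity_pt_pos_part_sqr (a x : R) :
  continuity_pt (fun t => pos_part (a - t) ^ 2) x.
Proof.
  assert (Hlin : continuity_pt (fun t => a - t) x).
  { apply continuity_pt_minus; [apply continuity_pt_const; intros ? ? |]; auto.
    apply continuity_pt_id. }
  assert (Hpos : continuity_pt (fun t => pos_part (a - t)) x).
  { unfold pos_part. apply continuity_pt_mult; [apply continuity_pt_plus |].
    - exact Hlin.
    - apply (continuity_pt_comp (fun t => a - t) Rabs); [exact Hlin | apply Rcontinuity_abs].
    - apply continuity_pt_const; intros ? ?; auto. }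
  apply (continuity_pt_comp (fun t => pos_part (a - t)) (fun u => u ^ 2)); [exact Hpos |].
  apply derivable_continuous_pt, derivable_pt_pow.
Qed.

Lemma cont_on_opp (xl : R) (f : R -> R) : cont_on xl f -> cont_on xl (fun x => - f x).
Proof.
  intros Hf x0 Hx0 e He. destruct (Hf x0 Hx0 e He) as [d [Hd H]].
  exists d; split; [exact Hd |]. intros x Hx Hdx.
  replace (- f x - - f x0) with (- (f x - f x0)) by ring.
  rewrite Rabs_Ropp; auto.
Qed.

Lemma continuity_pt_Rmax_ext (xl : R) (f : R -> R) :
  cont_on xl f -> forall x, continuity_pt (fun t => f (Rmax xl t)) x.
Proof.
  intros Hf x. apply continuity_pt_locally. intros e.
  destruct (Hf (Rmax xl x) (Rmax_l _ _) e (cond_pos e)) as [d [Hd H]].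
  exists (mkposreal d Hd). intros t Ht. change (Rabs (t - x) < d) in Ht.
  apply H; [apply Rmax_l |]. apply Rle_lt_trans with (2 := Ht).
  unfold Rmax, Rabs; destruct (Rle_dec xl t), (Rle_dec xl x);
    repeat match goal with |- context [Rcase_abs ?u] => destruct (Rcase_abs u) end; lra.
Qed.

Lemma interior_min (f : R -> R) (a b c : R) :
  (forall x, a <= x <= b -> continuity_pt f x) -> a < c < b ->
  f c < f a -> f c <= f b ->
  exists m, a < m < b /\ forall x, a <= x <= b -> f m <= f x.
Proof.
  intros Hf Hc Ha Hb.
  destruct (continuity_ab_min f a b ltac:(lra) Hf) as [m [Hm Hmab]].
  destruct (Req_dec m b) as [-> | Hmb].
  - exists c; split; [lra |]. intros x Hx. specialize (Hm x Hx); lra.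
  - exists m; split; [| exact Hm].
    destruct (Req_dec m a) as [-> | Hma]; [specialize (Hm c ltac:(lra)) |]; lra.
Qed.

Lemma interior_max (f : R -> R) (a b c : R) :
  (forall x, a <= x <= b -> continuity_pt f x) -> a < c < b ->
  f a < f c -> f b <= f c ->
  exists m, a < m < b /\ forall x, a <= x <= b -> f x <= f m.
Proof.
  intros Hf Hc Ha Hb.
  destruct (interior_min (fun x => - f x) a b c) as [m [Hm Hmin]]; try lra.
  - intros x Hx. apply continuity_pt_opp, Hf, Hx.
  - exists m; split; [exact Hm |]. intros x Hx. specialize (Hmin x Hx); lra.
Qed.

Lemma loc_min_rel_of_interval (xl : R) (f : R -> R) (a b m : R) :
  a < m < b -> (forall x, xl <= x -> a <= x <= b -> f m <= f x) -> loc_min_rel xl f m.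
Proof.
  intros Hm H. exists (Rmin (m - a) (b - m)). split; [apply Rmin_glb_lt; lra |].
  intros x Hx Hd. apply H; [exact Hx |].
  pose proof (Rmin_l (m - a) (b - m)). pose proof (Rmin_r (m - a) (b - m)).
  apply Rabs_def2 in Hd. lra.
Qed.

Lemma loc_max_rel_of_interval (xl : R) (f : R -> R) (a b m : R) :
  a < m < b -> (forall x, xl <= x -> a <= x <= b -> f x <= f m) -> loc_max_rel xl f m.
Proof.
  intros Hm H.
  destruct (loc_min_rel_of_interval xl (fun x => - f x) a b m Hm) as [d [Hd Hmin]].
  - intros x Hx Hab. specialize (H x Hx Hab); lra.
  - exists d; split; [exact Hd |]. intros x Hx Hdx. specialize (Hmin x Hx Hdx); lra.
Qed.

Lemma slope_le_of_no_line_above (xl M P a : R) (V : R -> R) :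
  cont_on xl V -> (forall x, xl <= x -> Rabs (V x) <= M) -> 0 < P -> xl <= a ->
  (forall x0, a < x0 -> ~ loc_max_rel xl (fun x => V x - P * x) x0) ->
  forall b, a <= b -> V b - V a <= P * (b - a).
Proof.
  intros Hc HM HP Ha Hnot b Hab.
  apply Rnot_lt_le; intros Hlt.
  assert (Hab' : a < b) by (destruct Hab as [| <-]; [auto | lra]).
  assert (HM0 : 0 <= M) by (pose proof (HM a Ha); pose proof (Rabs_pos (V a)); lra).
  set (B := b + (2 * M + 1) / P).
  assert (HB : P * (B - a) = P * (b - a) + 2 * M + 1) by (unfold B; field; lra).
  assert (HbB : b < B) by (unfold B; pose proof (Rdiv_lt_0_compat (2 * M + 1) P); lra).
  set (g := fun x => V (Rmax xl x) - P * x).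
  assert (Eg : forall x, xl <= x -> g x = V x - P * x).
  { intros x Hx; unfold g; rewrite Rmax_right; lra. }
  destruct (interior_max g a B b) as [m [Hm Hmax]].
  - intros x _. apply continuity_pt_minus;
      [apply continuity_pt_Rmax_ext, Hc | apply continuity_pt_linear].
  - lra.
  - rewrite !Eg; lra.
  - assert (HVB := HM B ltac:(lra)). assert (HVa := HM a Ha).
    apply Rabs_le_between in HVB, HVa. rewrite !Eg; nra.
  - apply (Hnot m); [lra |]. apply loc_max_rel_of_interval with a B; [lra |].
    intros x Hx Hax. rewrite <- !Eg by lra. apply Hmax; lra.
Qed.

Lemma nondecreasing_of_lines_below (xl M : R) (V : R -> R) :
  cont_on xl V -> (forall x, xl <= x -> Rabs (V x) <= M) ->
  (forall s x0, xl < x0 -> loc_min_rel xl (fun x => V x - s * x) x0 -> 0 <= s) ->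
  forall a b, xl <= a -> a <= b -> V a <= V b.
Proof.
  intros Hc HM Hs a b Ha Hab.
  (* [- V] has no line of positive slope touching it from above. *)
  assert (Hslope : forall P, 0 < P -> V a - V b <= P * (b - a)).
  { intros P HP. replace (V a - V b) with (- V b - - V a) by ring.
    apply (slope_le_of_no_line_above xl M P a (fun x => - V x)); auto.
    - apply cont_on_opp, Hc.
    - intros x Hx; rewrite Rabs_Ropp; auto.
    - intros x0 Hx0 [d [Hd Hmax]]. enough (0 <= - P) by lra.
      apply (Hs (- P) x0); [lra |]. exists d; split; [exact Hd |].
      intros x Hx Hdx. specialize (Hmax x Hx Hdx); lra. }
  apply Rle_plus_epsilon; intros eps Heps.
  set (P := eps / (b - a + 1)).
  assert (HP : P * (b - a + 1) = eps) by (unfold P; field; lra).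
  assert (HP0 : 0 < P) by (unfold P; apply Rdiv_lt_0_compat; lra).
  specialize (Hslope P HP0). nra.
Qed.

Lemma touch_below_of_penalized_min (xl s K a al b m : R) (V : R -> R) :
  0 <= K -> al < m < b -> al <= a ->
  (forall x, xl <= x -> al <= x <= b ->
     V m - s * m + K * pos_part (a - m) ^ 2 <= V x - s * x + K * pos_part (a - x) ^ 2) ->
  exists psi, smooth psi /\ loc_min_rel xl (fun x => V x - psi x) m /\ s <= Derive psi m.
Proof.
  intros HK Hm Hal Hmin.
  destruct (Rle_or_lt m a) as [Hma | Ham].
  - exists (fun x => s * x - K * (x - a) ^ 2).
    split; [apply smooth_quadratic |]. split.
    + apply loc_min_rel_of_interval with al b; [exact Hm |]. intros x Hx Hx'.
      specialize (Hmin x Hx Hx'). rewrite pos_part_nonneg in Hmin by lra.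
      assert (K * pos_part (a - x) ^ 2 <= K * (a - x) ^ 2)
        by (apply Rmult_le_compat_l; [exact HK | apply pos_part_sqr_le]).
      nra.
    + rewrite Derive_quadratic. nra.
  - exists (fun x => s * x).
    split; [apply smooth_linear |]. split.
    + apply loc_min_rel_of_interval with a b; [lra |]. intros x Hx Hx'.
      specialize (Hmin x Hx ltac:(lra)). rewrite !pos_part_nonpos in Hmin by lra. lra.
    + rewrite Derive_linear. lra.
Qed.

Lemma slope_le_of_tests_below_interior (xl P a b : R) (V : R -> R) :
  cont_on xl V -> xl < a -> a <= b ->
  (forall psi x0, smooth psi -> xl < x0 <= b ->
     loc_min_rel xl (fun x => V x - psi x) x0 -> Derive psi x0 <= P) ->
  V b - V a <= P * (b - a).
Proof.
  intros Hc Ha Hab Htest.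
  apply Rnot_lt_le; intros Hlt.
  assert (Hab' : a < b) by (destruct Hab as [| <-]; [auto | lra]).
  set (s := (V b - V a) / (b - a)).
  assert (Hs : s * (b - a) = V b - V a) by (unfold s; field; lra).
  assert (HPs : P < s) by nra.
  set (al := (xl + a) / 2).
  assert (Hal : xl < al < a) by (unfold al; lra).
  (* [K] makes the penalty [K (a - x)_+^2] lift [Phi al] above [Phi a = Phi b]. *)
  set (D := V a - s * a - (V al - s * al)).
  set (K := (Rabs D + 1) / (a - al) ^ 2).
  assert (HK : K * (a - al) ^ 2 = Rabs D + 1) by (unfold K; field; lra).
  assert (HK0 : 0 <= K).
  { apply Rdiv_le_0_compat; [pose proof (Rabs_pos D); lra | apply pow_lt; lra]. }
  set (Phi := fun x => V (Rmax xl x) - s * x + K * pos_part (a - x) ^ 2).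
  assert (EPhi : forall x, xl <= x -> Phi x = V x - s * x + K * pos_part (a - x) ^ 2).
  { intros x Hx; unfold Phi; rewrite Rmax_right; lra. }
  destruct (interior_min Phi al b a) as [m [Hm Hmin]].
  - intros x _. apply continuity_pt_plus; [apply continuity_pt_minus |].
    + apply continuity_pt_Rmax_ext, Hc.
    + apply continuity_pt_linear.
    + apply continuity_pt_mult; [apply continuity_pt_const; intros ? ?; auto |].
      apply continuity_pt_pos_part_sqr.
  - lra.
  - rewrite !EPhi by lra.
    rewrite (pos_part_nonpos (a - a)), (pos_part_nonneg (a - al)) by lra.
    pose proof (Rle_abs D). unfold D in *. nra.
  - rewrite !EPhi by lra. rewrite !pos_part_nonpos by lra. nra.
  - destruct (touch_below_of_penalized_min xl s K a al b m V HK0 Hm ltac:(lra))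
      as [psi [Hpsi [Hloc Hder]]].
    + intros x Hx Hx'. rewrite <- !EPhi by lra. apply Hmin, Hx'.
    + specialize (Htest psi m Hpsi ltac:(lra) Hloc). lra.
Qed.

Lemma slope_le_of_tests_below (xl P a b : R) (V : R -> R) :
  cont_on xl V -> 0 <= P -> xl <= a -> a <= b ->
  (forall psi x0, smooth psi -> xl < x0 <= b ->
     loc_min_rel xl (fun x => V x - psi x) x0 -> Derive psi x0 <= P) ->
  V b - V a <= P * (b - a).
Proof.
  intros Hc HP Ha Hab Htest.
  destruct Ha as [Ha | <-].
  { exact (slope_le_of_tests_below_interior xl P a b V Hc Ha Hab Htest). }
  destruct Hab as [Hb | <-]; [| lra].
  apply Rle_plus_epsilon; intros eps Heps.
  destruct (Hc xl (Rle_refl xl) eps Heps) as [d [Hd Hcont]].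
  set (a := xl + Rmin d (b - xl) / 2).
  pose proof (Rmin_l d (b - xl)). pose proof (Rmin_r d (b - xl)).
  assert (Hmin : 0 < Rmin d (b - xl)) by (apply Rmin_glb_lt; lra).
  assert (Hva : Rabs (V a - V xl) < eps).
  { apply Hcont; [unfold a; lra |]. rewrite Rabs_right; unfold a; lra. }
  apply Rabs_def2 in Hva.
  assert (V b - V a <= P * (b - a))
    by (apply (slope_le_of_tests_below_interior xl); auto; unfold a; lra).
  assert (P * (b - a) <= P * (b - xl)) by (apply Rmult_le_compat_l; unfold a; lra).
  lra.
Qed.

Lemma slope_le_split (xl z L1 L2 : R) (f : R -> R) :
  0 <= L1 -> 0 <= L2 ->
  (forall a b, xl <= a -> a <= b -> b <= z -> f b - f a <= L1 * (b - a)) ->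
  (forall a b, xl <= a -> z <= a -> a <= b -> f b - f a <= L2 * (b - a)) ->
  forall a b, xl <= a -> a <= b -> f b - f a <= (L1 + L2) * (b - a).
Proof.
  intros HL1 HL2 Hleft Hright a b Ha Hab.
  assert (0 <= L1 * (b - a)) by (apply Rmult_le_pos; lra).
  assert (0 <= L2 * (b - a)) by (apply Rmult_le_pos; lra).
  destruct (Rle_or_lt b z) as [Hbz | Hzb]; [specialize (Hleft a b Ha Hab Hbz); lra |].
  destruct (Rle_or_lt z a) as [Hza | Haz]; [specialize (Hright a b Ha Hza Hab); lra |].
  specialize (Hleft a z Ha ltac:(lra) ltac:(lra)).
  specialize (Hright z b ltac:(lra) ltac:(lra) ltac:(lra)).
  nra.
Qed.

Lemma lipschitz_on_of_nondecreasing (xl L : R) (f : R -> R) :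
  (forall a b, xl <= a -> a <= b -> f a <= f b) ->
  (forall a b, xl <= a -> a <= b -> f b - f a <= L * (b - a)) ->
  lipschitz_on xl f.
Proof.
  intros Hmono Hslope. exists L. intros x x' Hx Hx'.
  destruct (Rle_or_lt x x') as [H | H].
  - specialize (Hmono x x' Hx H). specialize (Hslope x x' Hx H).
    rewrite !Rabs_left1 by lra. lra.
  - specialize (Hmono x' x Hx' ltac:(lra)). specialize (Hslope x' x Hx' ltac:(lra)).
    rewrite !Rabs_right by lra. lra.
Qed.

Definition Ham_drift (gamma e p : R) : R :=
  e * p + gamma / (1 - gamma) * powp p (1 - 1 / gamma).

Lemma Ham_nonneg (r gamma x y p : R) :
  0 <= p -> Ham r gamma x y p = Finite (Ham_drift gamma (r * x + y) p).
Proof. intros Hp; unfold Ham; destruct (Rle_dec 0 p); [reflexivity | contradiction]. Qed.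

Lemma Ham_neg (r gamma x y p : R) : p < 0 -> Ham r gamma x y p = p_infty.
Proof. intros Hp; unfold Ham; destruct (Rle_dec 0 p); [lra | reflexivity]. Qed.

Lemma Ham_drift_coercive (gamma e0 K : R) : 1 < gamma -> 0 < e0 ->
  exists P, 0 <= P /\ forall e p, e0 <= e -> P < p -> K < Ham_drift gamma e p.
Proof.
  intros Hg He0.
  set (C := gamma / (gamma - 1)).
  assert (HC : 0 < C) by (apply Rdiv_lt_0_compat; lra).
  set (P0 := Rpower (2 * C / e0) gamma).
  assert (HP0 : 0 < P0) by apply exp_pos.
  assert (HK : 2 * Rabs K / e0 * e0 = 2 * Rabs K) by (field; lra).
  assert (HKpos : 0 <= 2 * Rabs K / e0).
  { apply Rdiv_le_0_compat; [pose proof (Rabs_pos K) |]; lra. }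
  exists (P0 + 2 * Rabs K / e0). split; [lra |].
  intros e p He Hp.
  assert (Hp0 : 0 < p) by lra.
  (* Past [P0], the concave term [C p^(1 - 1/gamma) = C p / p^(1/gamma)] is at most [e0 p / 2]. *)
  set (q := Rpower p (1 / gamma)).
  assert (Hq : 2 * C / e0 < q).
  { replace (2 * C / e0) with (Rpower P0 (1 / gamma)).
    - apply Rlt_Rpower_l; [apply Rdiv_lt_0_compat |]; lra.
    - unfold P0. rewrite Rpower_mult.
      replace (gamma * (1 / gamma)) with 1 by (field; lra).
      apply Rpower_1, Rdiv_lt_0_compat; lra. }
  assert (Hq0 : 0 < q) by apply exp_pos.
  assert (Hpow : powp p (1 - 1 / gamma) = p / q).
  { unfold powp. destruct (Req_EM_T p 0); [lra |].
    replace (1 - 1 / gamma) with (1 + - (1 / gamma)) by ring.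
    rewrite Rpower_plus, Rpower_1, Rpower_Ropp by lra. reflexivity. }
  assert (Hconcave : C * (p / q) < e0 * p / 2).
  { assert (2 * C / e0 * e0 = 2 * C) by (field; lra).
    assert (2 * C < e0 * q) by nra.
    apply Rmult_lt_reg_r with q; [exact Hq0 |].
    replace (C * (p / q) * q) with (C * p) by (field; lra). nra. }
  assert (Hlinear : 2 * Rabs K < e0 * p) by nra.
  assert (e0 * p <= e * p) by nra.
  unfold Ham_drift. rewrite Hpow.
  replace (gamma / (1 - gamma)) with (- C) by (unfold C; field; lra).
  pose proof (Rle_abs K). lra.
Qed.

Lemma Ham_drift_level (gamma K : R) : 1 < gamma -> 0 < K ->
  exists P, 0 < P /\ forall e, Ham_drift gamma e P = e * P - K.
Proof.
  intros Hg HK.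
  set (th := 1 - 1 / gamma).
  assert (Hth : 0 < th).
  { replace th with ((gamma - 1) / gamma) by (unfold th; field; lra).
    apply Rdiv_lt_0_compat; lra. }
  set (P := Rpower (K * (gamma - 1) / gamma) (/ th)).
  assert (HP : 0 < P) by apply exp_pos.
  exists P. split; [exact HP |]. intros e.
  assert (Hpow : powp P th = K * (gamma - 1) / gamma).
  { unfold powp. destruct (Req_EM_T P 0); [lra |].
    unfold P. rewrite Rpower_mult, Rinv_l, Rpower_1; [reflexivity | | lra].
    apply Rdiv_lt_0_compat; nra. }
  unfold Ham_drift. fold th. rewrite Hpow. field; lra.
Qed.

Section BoundedSolution.

Context {rho r gamma xl M : R} {y lam : bool -> R} {v : bool -> R -> R} {j : bool}.
Hypothesis rho_pos : 0 < rho.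
Hypothesis gamma_gt1 : 1 < gamma.
Hypothesis lam_nonneg : 0 <= lam j.
Hypothesis v_bounded : forall i x, xl <= x -> Rabs (v i x) <= M.
Hypothesis v_sol : constrained_visc_sol rho r gamma xl y lam v.

Let K := rho * M + 2 * lam j * M.

Lemma supersolution_test (psi : R -> R) (x0 : R) :
  smooth psi -> xl < x0 -> loc_min_rel xl (fun x => v j x - psi x) x0 ->
  0 <= Derive psi x0 /\ Ham_drift gamma (r * x0 + y j) (Derive psi x0) <= K.
Proof.
  intros Hpsi Hx0 Hmin.
  destruct v_sol as [_ [[_ Hsuper] _]].
  specialize (Hsuper psi j x0 Hpsi Hx0 Hmin).
  destruct (Rlt_or_le (Derive psi x0) 0) as [Hneg | Hnonneg].
  - rewrite Ham_neg in Hsuper by exact Hneg. contradiction.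
  - rewrite Ham_nonneg in Hsuper by exact Hnonneg. simpl in Hsuper. split; [exact Hnonneg |].
    assert (Hj := v_bounded j x0 ltac:(lra)). assert (Hjbar := v_bounded (negb j) x0 ltac:(lra)).
    apply Rabs_le_between in Hj, Hjbar. unfold K. nra.
Qed.

Lemma subsolution_test (psi : R -> R) (x0 : R) :
  smooth psi -> xl <= x0 -> loc_max_rel xl (fun x => v j x - psi x) x0 ->
  0 <= Derive psi x0 -> - K <= Ham_drift gamma (r * x0 + y j) (Derive psi x0).
Proof.
  intros Hpsi Hx0 Hmax Hnonneg.
  destruct v_sol as [_ [_ [_ Hsub]]].
  specialize (Hsub psi j x0 Hpsi Hx0 Hmax).
  rewrite Ham_nonneg in Hsub by exact Hnonneg. simpl in Hsub.
  assert (Hj := v_bounded j x0 Hx0). assert (Hjbar := v_bounded (negb j) x0 Hx0).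
  apply Rabs_le_between in Hj, Hjbar. unfold K. nra.
Qed.

Lemma value_nondecreasing (a b : R) : xl <= a -> a <= b -> v j a <= v j b.
Proof.
  apply (nondecreasing_of_lines_below xl M); [apply v_sol | apply v_bounded |].
  intros s x0 Hx0 Hmin. rewrite <- (Derive_linear s x0).
  exact (proj1 (supersolution_test _ x0 (smooth_linear s) Hx0 Hmin)).
Qed.

Lemma value_slope_le_of_drift_ge (eps : R) : 0 < eps ->
  exists L, 0 <= L /\ forall a b, xl <= a -> a <= b ->
    (forall x, xl < x <= b -> eps <= r * x + y j) -> v j b - v j a <= L * (b - a).
Proof.
  intros Heps.
  destruct (Ham_drift_coercive gamma eps K gamma_gt1 Heps) as [P [HP Hcoercive]].
  exists P. split; [exact HP |]. intros a b Ha Hab Hdrift.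
  apply (slope_le_of_tests_below xl); [apply v_sol | exact HP | exact Ha | exact Hab |].
  intros psi x0 Hpsi Hx0 Hmin. apply Rnot_lt_le; intros Hlarge.
  destruct (supersolution_test psi x0 Hpsi (proj1 Hx0) Hmin) as [_ Hle].
  specialize (Hcoercive _ _ (Hdrift x0 Hx0) Hlarge). lra.
Qed.

Lemma value_slope_le_of_drift_le :
  exists eps, 0 < eps /\ exists L, 0 <= L /\ forall a b, xl <= a -> a <= b ->
    (forall x, a < x -> r * x + y j <= eps) -> v j b - v j a <= L * (b - a).
Proof.
  destruct (Ham_drift_level gamma (Rabs K + 1) gamma_gt1) as [P [HP Hlevel]].
  { pose proof (Rabs_pos K). lra. }
  exists (1 / (2 * P)). split; [apply Rdiv_lt_0_compat; lra |].
  exists P. split; [lra |]. intros a b Ha Hab Hdrift.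
  apply (slope_le_of_no_line_above xl M);
    [apply v_sol | apply v_bounded | exact HP | exact Ha | | exact Hab].
  intros x0 Hx0 Hmax.
  assert (Hsub := subsolution_test _ x0 (smooth_linear P) ltac:(lra) Hmax).
  rewrite Derive_linear, Hlevel in Hsub.
  (* At drift at most [1 / (2 P)], the subsolution inequality fails for the slope [P]. *)
  assert ((r * x0 + y j) * P <= 1 / (2 * P) * P)
    by (apply Rmult_le_compat_r; [lra | apply Hdrift, Hx0]).
  replace (1 / (2 * P) * P) with (1 / 2) in * by (field; lra).
  pose proof (Rle_abs K). lra.
Qed.

End BoundedSolution.

Theorem mainTheorem6 (rho r gamma xl : R) (y lam : bool -> R) (v : bool -> R -> R) :
  0 < rho -> r < rho ->
  0 < y true -> y true < y false ->
  1 < gamma ->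
  xl <= 0 -> 0 < rho * xl + y true -> 0 < rho * xl + y false ->
  0 <= lam true -> 0 <= lam false ->
  bounded_on xl v ->
  constrained_visc_sol rho r gamma xl y lam v ->
  forall j : bool, lipschitz_on xl (v j).
Proof.
  intros Hrho Hr Hy1 Hy2 Hg Hxl Hx1 Hx2 Hl1 Hl2 [M HM] Hsol j.
  assert (Hlam : 0 <= lam j) by (destruct j; assumption).
  assert (Hdrift : 0 < r * xl + y j) by (destruct j; nra).
  pose proof (value_nondecreasing Hrho Hlam HM Hsol) as Hmono.
  pose proof (value_slope_le_of_drift_ge Hrho Hg Hlam HM Hsol) as Hleft.
  destruct (Rle_or_lt 0 r) as [Hr0 | Hr0].
  - destruct (Hleft _ Hdrift) as [L [_ HL]].
    apply (lipschitz_on_of_nondecreasing xl L); [exact Hmono |].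
    intros a b Ha Hab. apply HL; [exact Ha | exact Hab |]. intros x [Hx _]. nra.
  - destruct (value_slope_le_of_drift_le Hrho Hg Hlam HM Hsol)
      as [eps [Heps [L2 [HL2 Hright]]]].
    destruct (Hleft eps Heps) as [L1 [HL1 HL1slope]].
    set (z := (eps - y j) / r).
    assert (Hz : r * z + y j = eps) by (unfold z; field; lra).
    apply (lipschitz_on_of_nondecreasing xl (L1 + L2)); [exact Hmono |].
    apply (slope_le_split xl z); [exact HL1 | exact HL2 | |].
    + intros a b Ha Hab Hbz. apply HL1slope; [exact Ha | exact Hab |]. intros x [_ Hx]. nra.
    + intros a b Ha Hza Hab. apply Hright; [exact Ha | exact Hab |]. intros x Hx. nra.
Qed.
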